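(* Let $\mathcal{L}=(R_i:i<k)$ be a finite relational language, $K$ a Fraïssé class of finite $\mathcal{L}$-structures with the Strong Amalgamation Property, and $T$ the theory of its Fraïssé limit. Let $N=(A,B)$ be a monster model of $T_{pfc}$ (with $A$ the universe of sort $O$ and $B$ the universe of sort $P$). Then for any $A_0\subseteq A$ and $B_0\subseteq B$, we have $\mathrm{acl}(A_0\cup B_0)\cap B=B_0$.
   Context: $K$ has SAP if for all $A,B,C\in K$ and embeddings $e:A\to B$, $f:A\to C$ there are $D\in K$ and embeddings $g:B\to D$, $h:C\to D$ with $ge=hf$ and $\mathrm{im}(g)\cap\mathrm{im}(h)=\mathrm{im}(ge)$. If $R_i$ has arity $n_i$, $\mathcal{L}_{pfc}$ is the two-sorted language with sorts $O$ and $P$ and relation symbols $R^i_x(x,y_1,\dots,y_{n_i})$ with $x$ of sort $P$ and $y_1,\dots,y_{n_i}$ of sort $O$. For an $\mathcal{L}_{pfc}$-structure $M=(A,B)$ and $b\in B$, $A_b$ is the $\mathcal{L}$-structure with domain $A$ in which $R_i$ is interpreted as $\{\bar y: R^i(b,\bar y)\}$. $K_{pfc}$ is the class of finite $\mathcal{L}_{pfc}$-structures $(A,B)$ such that $A_b$ is isomorphic to a member of $K$ for every $b\in B$; it is a Fraïssé class with SAP, and $T_{pfc}$ is the theory of its Fraïssé limit (it has quantifier elimination). acl is computed in $N$ over parameters from both sorts. *)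

From Stdlib Require Import List Arith.
Import ListNotations.

(** * One-sorted L-structures for L = (R_i : i < k), R_i of arity ar i.
    Tuples are lists; only atoms with i < k and length = ar i are meaningful. *)
Record Lstr := { ucar : Type; urel : nat -> list ucar -> Prop }.

Definition is_finite (T : Type) : Prop := exists l : list T, forall x, In x l.

Definition embedding (k : nat) (ar : nat -> nat) (A B : Lstr)
  (f : ucar A -> ucar B) : Prop :=
  (forall x y, f x = f y -> x = y) /\
  (forall i xs, i < k -> length xs = ar i ->
     (urel A i xs <-> urel B i (map f xs))).

Definition isomorphic (k : nat) (ar : nat -> nat) (A B : Lstr) : Prop :=
  exists f, embedding k ar A B f /\ (forall y, exists x, f x = y).

Definition substr (A : Lstr) (S : ucar A -> Prop) : Lstr :=
  {| ucar := { x | S x };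
     urel := fun i xs => urel A i (map (@proj1_sig _ _) xs) |}.

(** Fraisse class of finite L-structures: finite members, nonempty, closed
    under isomorphism, HP, JEP, AP.  (Countably many isomorphism types is
    automatic for a finite relational language.) *)
Definition fraisse_class (k : nat) (ar : nat -> nat) (K : Lstr -> Prop) : Prop :=
  (forall A, K A -> is_finite (ucar A)) /\
  (exists A, K A) /\
  (forall A B, K A -> isomorphic k ar A B -> K B) /\
  (forall A S, K A -> K (substr A S)) /\
  (forall A B, K A -> K B ->
     exists C, K C /\ (exists f, embedding k ar A C f) /\
                      (exists g, embedding k ar B C g)) /\
  (forall A B C (e : ucar A -> ucar B) (f : ucar A -> ucar C),
     K A -> K B -> K C -> embedding k ar A B e -> embedding k ar A C f ->
     exists D (g : ucar B -> ucar D) (h : ucar C -> ucar D),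
       K D /\ embedding k ar B D g /\ embedding k ar C D h /\
       (forall a, g (e a) = h (f a))).

Definition SAP (k : nat) (ar : nat -> nat) (K : Lstr -> Prop) : Prop :=
  forall A B C (e : ucar A -> ucar B) (f : ucar A -> ucar C),
     K A -> K B -> K C -> embedding k ar A B e -> embedding k ar A C f ->
     exists D (g : ucar B -> ucar D) (h : ucar C -> ucar D),
       K D /\ embedding k ar B D g /\ embedding k ar C D h /\
       (forall a, g (e a) = h (f a)) /\
       (forall d, ((exists b, d = g b) /\ (exists c, d = h c)) <->
                  (exists a, d = g (e a))).

(** * Two-sorted L_pfc-structures (A,B): sort O = oc, sort P = pc;
    prel i b ys  is  R^i(b, ys). *)
Record Pstr := { oc : Type; pc : Type; prel : nat -> pc -> list oc -> Prop }.

Definition fiber (M : Pstr) (b : pc M) : Lstr :=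
  {| ucar := oc M; urel := fun i ys => prel M i b ys |}.

Definition Kpfc (k : nat) (ar : nat -> nat) (K : Lstr -> Prop) (M : Pstr) : Prop :=
  is_finite (oc M) /\ is_finite (pc M) /\
  (forall b : pc M, exists C, K C /\ isomorphic k ar (fiber M b) C).

Definition pembedding (k : nat) (ar : nat -> nat) (M N : Pstr)
  (fo : oc M -> oc N) (fp : pc M -> pc N) : Prop :=
  (forall x y, fo x = fo y -> x = y) /\
  (forall x y, fp x = fp y -> x = y) /\
  (forall i b ys, i < k -> length ys = ar i ->
     (prel M i b ys <-> prel N i (fp b) (map fo ys))).

Definition pisomorphism (k : nat) (ar : nat -> nat) (M N : Pstr)
  (fo : oc M -> oc N) (fp : pc M -> pc N) : Prop :=
  pembedding k ar M N fo fp /\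
  (forall y, exists x, fo x = y) /\ (forall y, exists x, fp x = y).

Definition psubstr (M : Pstr) (SO : oc M -> Prop) (SP : pc M -> Prop) : Pstr :=
  {| oc := { x | SO x }; pc := { y | SP y };
     prel := fun i b ys => prel M i (proj1_sig b) (map (@proj1_sig _ _) ys) |}.

(** M is a Fraisse limit of the class KK of finite L_pfc-structures:
    countable, age(M) = KK, ultrahomogeneous. *)
Definition fraisse_limit (k : nat) (ar : nat -> nat) (KK : Pstr -> Prop)
  (M : Pstr) : Prop :=
  (exists f : oc M -> nat, forall x y, f x = f y -> x = y) /\
  (exists f : pc M -> nat, forall x y, f x = f y -> x = y) /\
  (forall SO SP, is_finite { x | SO x } -> is_finite { y | SP y } ->
     KK (psubstr M SO SP)) /\
  (forall C, KK C -> exists fo fp, pembedding k ar C M fo fp) /\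
  (forall SO SP TO TP fo fp,
     is_finite { x | SO x } -> is_finite { y | SP y } ->
     pisomorphism k ar (psubstr M SO SP) (psubstr M TO TP) fo fp ->
     exists go gp, pisomorphism k ar M M go gp /\
       (forall x, go (proj1_sig x) = proj1_sig (fo x)) /\
       (forall y, gp (proj1_sig y) = proj1_sig (fp y))).

(** * First-order formulas of L_pfc (named variables, one namespace per sort). *)
Inductive pform : Type :=
| FEqO : nat -> nat -> pform
| FEqP : nat -> nat -> pform
| FRel : nat -> nat -> list nat -> pform
| FNot : pform -> pform
| FAnd : pform -> pform -> pform
| FExO : nat -> pform -> pform
| FExP : nat -> pform -> pform.

Definition upd {T : Type} (e : nat -> T) (n : nat) (v : T) : nat -> T :=
  fun m => if Nat.eqb m n then v else e m.

Fixpoint lookup_all {T : Type} (e : nat -> option T) (ys : list nat)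
  : option (list T) :=
  match ys with
  | [] => Some []
  | y :: ys' =>
      match e y, lookup_all e ys' with
      | Some a, Some l => Some (a :: l)
      | _, _ => None
      end
  end.

(** Satisfaction with partial assignments (unassigned variables make atoms
    false; for formulas whose free variables are assigned this is the usual
    Tarskian semantics). *)
Fixpoint psat (k : nat) (ar : nat -> nat) (M : Pstr)
  (eO : nat -> option (oc M)) (eP : nat -> option (pc M)) (phi : pform) : Prop :=
  match phi with
  | FEqO i j => exists a, eO i = Some a /\ eO j = Some a
  | FEqP i j => exists b, eP i = Some b /\ eP j = Some b
  | FRel r x ys =>
      r < k /\ length ys = ar r /\
      exists b zs, eP x = Some b /\ lookup_all eO ys = Some zs /\ prel M r b zs
  | FNot psi => ~ psat k ar M eO eP psi
  | FAnd psi chi => psat k ar M eO eP psi /\ psat k ar M eO eP chi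
  | FExO n psi => exists a, psat k ar M (upd eO n (Some a)) eP psi
  | FExP n psi => exists b, psat k ar M eO (upd eP n (Some b)) psi
  end.

Definition elem_equiv (k : nat) (ar : nat -> nat) (M N : Pstr) : Prop :=
  forall phi, psat k ar M (fun _ => None) (fun _ => None) phi <->
              psat k ar N (fun _ => None) (fun _ => None) phi.

Definition in_aclP (k : nat) (ar : nat -> nat) (N : Pstr)
  (A0 : oc N -> Prop) (B0 : pc N -> Prop) (b : pc N) : Prop :=
  exists (phi : pform) (x : nat) (eO : nat -> option (oc N))
         (eP : nat -> option (pc N)),
    (forall n a, eO n = Some a -> A0 a) /\
    (forall n c, n <> x -> eP n = Some c -> B0 c) /\
    psat k ar N eO (upd eP x (Some b)) phi /\
    (exists l : list (pc N), forall b',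
        psat k ar N eO (upd eP x (Some b')) phi -> In b' l).

From Stdlib Require Import List Arith Lia Classical ClassicalEpsilon ProofIrrelevance.
Import ListNotations.

(* A formula involves only finitely many parameters.  A P-element of a structure in K_pfc can
   be duplicated together with its fibre, so by ultrahomogeneity every P-element of the Fraisse
   limit M that is not among the P-parameters has arbitrarily many distinct conjugates over
   them.  Hence M satisfies, for every phi(x; params) and every n, the sentence "every solution
   of phi outside the P-parameters comes with n distinct solutions"; these sentences hold in N
   as well, so no element of B outside B0 is algebraic over A0 u B0. *)

Lemma upd_eq {T} (e : nat -> T) n v : upd e n v n = v.
Proof. unfold upd; rewrite Nat.eqb_refl; reflexivity. Qed.

Lemma upd_neq {T} (e : nat -> T) n v m : m <> n -> upd e n v m = e m.
Proof. intros H; unfold upd; destruct (Nat.eqb_spec m n); congruence. Qed.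

Lemma upd_upd {T} (e : nat -> T) n v v' m : upd (upd e n v) n v' m = upd e n v' m.
Proof. unfold upd; destruct (Nat.eqb m n); reflexivity. Qed.

Lemma option_map_upd {T U} (g : T -> U) (e : nat -> option T) n a m :
  option_map g (upd e n (Some a) m) = upd (fun v => option_map g (e v)) n (Some (g a)) m.
Proof. unfold upd; destruct (Nat.eqb m n); reflexivity. Qed.

Lemma lookup_all_ext {T} (e e' : nat -> option T) ys :
  (forall v, In v ys -> e v = e' v) -> lookup_all e ys = lookup_all e' ys.
Proof.
  induction ys as [|y ys IH]; intros H; simpl; [reflexivity|].
  rewrite H by (left; reflexivity). rewrite IH by (intros; apply H; right; auto).
  reflexivity.
Qed.

Lemma lookup_all_map {T U} (g : T -> U) (e : nat -> option T) ys :
  lookup_all (fun v => option_map g (e v)) ys = option_map (map g) (lookup_all e ys).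
Proof.
  induction ys as [|y ys IH]; simpl; [reflexivity|].
  rewrite IH. destruct (e y), (lookup_all e ys); reflexivity.
Qed.

Lemma lookup_all_length {T} (e : nat -> option T) ys zs :
  lookup_all e ys = Some zs -> length zs = length ys.
Proof.
  revert zs; induction ys as [|y ys IH]; simpl; intros zs H.
  - injection H as <-; reflexivity.
  - destruct (e y), (lookup_all e ys) eqn:E; inversion H; subst; simpl; auto.
Qed.

(* All occurring variables, bound ones included; this only weakens [psat_agree]. *)
Fixpoint varsO (phi : pform) : list nat :=
  match phi with
  | FEqO i j => [i; j]
  | FEqP _ _ => []
  | FRel _ _ ys => ys
  | FNot psi | FExO _ psi | FExP _ psi => varsO psi
  | FAnd psi chi => varsO psi ++ varsO chi
  end.

Fixpoint varsP (phi : pform) : list nat :=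
  match phi with
  | FEqO _ _ => []
  | FEqP i j => [i; j]
  | FRel _ x _ => [x]
  | FNot psi | FExO _ psi | FExP _ psi => varsP psi
  | FAnd psi chi => varsP psi ++ varsP chi
  end.

Section Semantics.

Variables (k : nat) (ar : nat -> nat).

Lemma psat_agree M phi : forall eO eO' eP eP',
  (forall v, In v (varsO phi) -> eO v = eO' v) ->
  (forall v, In v (varsP phi) -> eP v = eP' v) ->
  (psat k ar M eO eP phi <-> psat k ar M eO' eP' phi).
Proof.
  induction phi; intros eO eO' eP eP' HO HP; simpl in *.
  - rewrite (HO n), (HO n0) by auto. tauto.
  - rewrite (HP n), (HP n0) by auto. tauto.
  - rewrite (HP n0), (lookup_all_ext eO eO' l) by auto. tauto.
  - rewrite (IHphi eO eO' eP eP') by auto. tauto.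
  - rewrite (IHphi1 eO eO' eP eP'), (IHphi2 eO eO' eP eP') by auto using in_or_app. tauto.
  - split; intros [a Ha]; exists a; revert Ha; apply IHphi; auto;
      intros v Hv; unfold upd; destruct (Nat.eqb v n); auto; symmetry; auto.
  - split; intros [a Ha]; exists a; revert Ha; apply IHphi; auto;
      intros v Hv; unfold upd; destruct (Nat.eqb v n); auto; symmetry; auto.
Qed.

Lemma psat_ext M phi eO eO' eP eP' :
  (forall v, eO v = eO' v) -> (forall v, eP v = eP' v) ->
  (psat k ar M eO eP phi <-> psat k ar M eO' eP' phi).
Proof. intros; apply psat_agree; auto. Qed.

Lemma psat_pisomorphism M N go gp : pisomorphism k ar M N go gp -> forall phi eO eP,
  psat k ar M eO eP phi <->
  psat k ar N (fun v => option_map go (eO v)) (fun v => option_map gp (eP v)) phi.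
Proof.
  intros [[Hgo [Hgp Hrel]] [Hso Hsp]] phi.
  induction phi; intros eO eP; simpl.
  - split; intros [a [E1 E2]].
    + exists (go a). rewrite E1, E2. auto.
    + destruct (eO n) as [a1|], (eO n0) as [a2|]; simpl in *; try discriminate.
      injection E1 as E1; injection E2 as E2. exists a1. split; [reflexivity|].
      f_equal. apply Hgo. congruence.
  - split; intros [c [E1 E2]].
    + exists (gp c). rewrite E1, E2. auto.
    + destruct (eP n) as [c1|], (eP n0) as [c2|]; simpl in *; try discriminate.
      injection E1 as E1; injection E2 as E2. exists c1. split; [reflexivity|].
      f_equal. apply Hgp. congruence.
  - rewrite lookup_all_map.
    split; intros [Hn [Hl [c [zs [E1 [E2 Hr]]]]]]; split; auto; split; auto.
    + exists (gp c), (map go zs). rewrite E1, E2. repeat split; auto.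
      apply Hrel; auto. rewrite (lookup_all_length _ _ _ E2); auto.
    + destruct (eP n0) as [c0|], (lookup_all eO l) as [zs0|] eqn:E;
        simpl in *; try discriminate.
      injection E1 as <-; injection E2 as <-. exists c0, zs0. repeat split; auto.
      apply (Hrel n c0 zs0); auto. rewrite (lookup_all_length _ _ _ E); auto.
  - rewrite IHphi. tauto.
  - rewrite IHphi1, IHphi2. tauto.
  - split.
    + intros [a Ha]. exists (go a). rewrite IHphi in Ha. revert Ha.
      apply psat_ext; auto using option_map_upd.
    + intros [a Ha]. destruct (Hso a) as [a0 <-]. exists a0. rewrite IHphi. revert Ha.
      apply psat_ext; auto using option_map_upd.
  - split.
    + intros [c Hc]. exists (gp c). rewrite IHphi in Hc. revert Hc.
      apply psat_ext; auto using option_map_upd.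
    + intros [c Hc]. destruct (Hsp c) as [c0 <-]. exists c0. rewrite IHphi. revert Hc.
      apply psat_ext; auto using option_map_upd.
Qed.

Definition FTrue : pform := FNot (FAnd (FEqP 0 0) (FNot (FEqP 0 0))).

Lemma psat_FTrue M eO eP : psat k ar M eO eP FTrue.
Proof. simpl; tauto. Qed.

Definition FNotInP (x : nat) (zs : list nat) : pform :=
  fold_right (fun z acc => FAnd (FNot (FEqP x z)) acc) FTrue zs.

Lemma psat_FNotInP M eO eP x a zs : ~ In x zs ->
  (psat k ar M eO (upd eP x (Some a)) (FNotInP x zs) <->
   forall z, In z zs -> eP z <> Some a).
Proof.
  induction zs as [|z zs IH]; intros Hx; simpl.
  - split; [intros _ z [] | intros _; tauto].
  - rewrite IH by (intros H; apply Hx; right; exact H).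
    rewrite upd_eq, upd_neq by (intros ->; apply Hx; left; reflexivity). split.
    + intros [Hz Hzs] z' [<-|Hz'] E; [apply Hz; exists a; auto | exact (Hzs z' Hz' E)].
    + intros H. split; [intros [c [E1 E2]]; injection E1 as <-; exact (H z (or_introl eq_refl) E2)|].
      intros z' Hz'; apply H; auto.
Qed.

Definition solutions_at_least M eO eP (phi : pform) (x n : nat) : Prop :=
  exists ws, length ws = n /\ NoDup ws /\
    forall y, In y ws -> psat k ar M eO (upd eP x (Some y)) phi.

(* Each solution found is recorded in a fresh variable [base + m], above [x] and every
   P-variable of [phi], so that the later ones can be required to differ from it. *)
Fixpoint at_least_from (phi : pform) (x base n : nat) (zs : list nat) : pform :=
  match n with
  | 0 => FTrue
  | S m => FExP x (FAnd phi (FAnd (FNotInP x zs)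
             (FExP (base + m) (FAnd (FEqP (base + m) x)
               (at_least_from phi x base m ((base + m) :: zs))))))
  end.

Definition FAtLeast (phi : pform) (x n : nat) : pform :=
  at_least_from phi x (S (list_max (x :: varsP phi))) n [].

Lemma psat_at_least_from M phi x base :
  x < base -> (forall v, In v (varsP phi) -> v < base) ->
  forall n zs eO eP, (forall z, In z zs -> base + n <= z) ->
  (psat k ar M eO eP (at_least_from phi x base n zs) <->
   exists ws, length ws = n /\ NoDup ws /\
     (forall y z, In y ws -> In z zs -> eP z <> Some y) /\
     forall y, In y ws -> psat k ar M eO (upd eP x (Some y)) phi).
Proof.
  intros Hx Hphi n; induction n as [|n IH]; intros zs eO eP Hzs; cbn [at_least_from].
  - split; [|intros _; apply psat_FTrue].
    intros _; exists []; repeat split; [constructor | intros y z [] | intros y []].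
  - set (z0 := base + n).
    assert (Hx0 : x <> z0) by lia.
    assert (Hzs' : forall z, In z (z0 :: zs) -> base + n <= z)
      by (intros z [<-|Hz]; [lia | specialize (Hzs z Hz); lia]).
    assert (Hsol : forall a y, psat k ar M eO (upd (upd (upd eP x (Some a)) z0 (Some a)) x (Some y)) phi
                          <-> psat k ar M eO (upd eP x (Some y)) phi).
    { intros a y. apply psat_agree; auto. intros v Hv. specialize (Hphi v Hv).
      unfold upd. destruct (Nat.eqb_spec v x); auto. destruct (Nat.eqb_spec v z0); [lia|auto]. }
    assert (Hold : forall a z, In z zs -> upd (upd eP x (Some a)) z0 (Some a) z = eP z).
    { intros a z Hz. specialize (Hzs z Hz). rewrite !upd_neq by lia. reflexivity. }
    assert (Hxzs : ~ In x zs) by (intros Hz; specialize (Hzs x Hz); lia).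
    split.
    + intros [a [Ha [Hnew [u [[c [E1 E2]] Hrest]]]]].
      rewrite upd_eq in E1. rewrite upd_neq, upd_eq in E2 by auto.
      assert (u = a) by congruence; subst u.
      rewrite psat_FNotInP in Hnew by auto.
      rewrite IH in Hrest by auto. destruct Hrest as [ws [Hlen [Hnd [Hfresh Hws]]]].
      exists (a :: ws). repeat split.
      * simpl; congruence.
      * constructor; auto. intros Ha'. apply (Hfresh a z0 Ha' (or_introl eq_refl)).
        apply upd_eq.
      * intros y z [<-|Hy] Hz; [exact (Hnew z Hz)|].
        rewrite <- (Hold a z Hz). apply Hfresh; simpl; auto.
      * intros y [<-|Hy]; [exact Ha|]. apply (proj1 (Hsol a y)), Hws, Hy.
    + intros [[|a ws] [Hlen [Hnd [Hfresh Hws]]]]; [discriminate|].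
      injection Hlen as Hlen. apply NoDup_cons_iff in Hnd as [Ha Hnd].
      exists a. split; [apply Hws; left; reflexivity|]. split.
      { rewrite psat_FNotInP by auto. intros z Hz. apply Hfresh; simpl; auto. }
      exists a. split; [exists a; rewrite upd_eq, upd_neq, upd_eq by auto; auto|].
      rewrite IH by auto. exists ws. repeat split; auto.
      * intros y z Hy [<-|Hz].
        -- rewrite upd_eq. intros E; injection E as ->. contradiction.
        -- rewrite Hold by auto. apply Hfresh; simpl; auto.
      * intros y Hy. apply (proj2 (Hsol a y)), Hws. right; exact Hy.
Qed.

Lemma psat_FAtLeast M eO eP phi x n :
  psat k ar M eO eP (FAtLeast phi x n) <-> solutions_at_least M eO eP phi x n.
Proof.
  unfold FAtLeast, solutions_at_least.
  assert (Hbound : forall v, In v (x :: varsP phi) -> v < S (list_max (x :: varsP phi))).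
  { intros v Hv. apply Nat.lt_succ_r. revert v Hv. apply Forall_forall, list_max_le. reflexivity. }
  rewrite psat_at_least_from by (simpl in *; auto; intros z []).
  split; intros [ws [Hlen [Hnd H]]]; exists ws; repeat split; try tauto.
Qed.

Lemma solutions_at_least_upd M eO eP phi x n a :
  solutions_at_least M eO (upd eP x a) phi x n <-> solutions_at_least M eO eP phi x n.
Proof.
  unfold solutions_at_least.
  split; intros [ws [Hlen [Hnd Hws]]]; exists ws; repeat split; auto;
    intros y Hy; specialize (Hws y Hy); revert Hws; apply psat_ext; auto;
    intros v; [symmetry|]; apply upd_upd.
Qed.

Fixpoint FAllO (vs : list nat) (phi : pform) : pform :=
  match vs with [] => phi | v :: vs' => FNot (FExO v (FNot (FAllO vs' phi))) end.

Fixpoint FAllP (vs : list nat) (phi : pform) : pform :=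
  match vs with [] => phi | v :: vs' => FNot (FExP v (FNot (FAllP vs' phi))) end.

Lemma psat_FAllO M vs phi : forall eO eP,
  psat k ar M eO eP (FAllO vs phi) <->
  forall eO', (forall v, ~ In v vs -> eO' v = eO v) -> (forall v, In v vs -> eO' v <> None) ->
    psat k ar M eO' eP phi.
Proof.
  induction vs as [|v vs IH]; intros eO eP; cbn [FAllO].
  - split; [|intros H; apply H; auto; intros w []].
    intros H eO' Hout _. revert H. apply psat_ext; auto; intros w; symmetry; apply Hout; auto.
  - cbn [psat]. setoid_rewrite IH. split.
    + intros H eO' Hout Hin. destruct (eO' v) as [a|] eqn:Ea; [|exfalso; apply (Hin v); simpl; auto].
      apply NNPP; intros Hn. apply H. exists a. intros H'. apply Hn, H'.
      * intros w Hw. unfold upd. destruct (Nat.eqb_spec w v) as [->|Hwv]; auto.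
        apply Hout. intros [?|?]; auto.
      * intros w Hw; apply Hin; right; auto.
    + intros H [a Ha]. apply Ha. intros eO' Hout Hin. apply H.
      * intros w Hw. rewrite Hout by (intros Hc; apply Hw; right; auto).
        apply upd_neq. intros ->; apply Hw; left; auto.
      * intros w [<-|Hw]; auto. destruct (in_dec Nat.eq_dec v vs); auto.
        rewrite Hout, upd_eq by auto. discriminate.
Qed.

Lemma psat_FAllP M vs phi : forall eO eP,
  psat k ar M eO eP (FAllP vs phi) <->
  forall eP', (forall v, ~ In v vs -> eP' v = eP v) -> (forall v, In v vs -> eP' v <> None) ->
    psat k ar M eO eP' phi.
Proof.
  induction vs as [|v vs IH]; intros eO eP; cbn [FAllP].
  - split; [|intros H; apply H; auto; intros w []].
    intros H eP' Hout _. revert H. apply psat_ext; auto; intros w; symmetry; apply Hout; auto.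
  - cbn [psat]. setoid_rewrite IH. split.
    + intros H eP' Hout Hin. destruct (eP' v) as [a|] eqn:Ea; [|exfalso; apply (Hin v); simpl; auto].
      apply NNPP; intros Hn. apply H. exists a. intros H'. apply Hn, H'.
      * intros w Hw. unfold upd. destruct (Nat.eqb_spec w v) as [->|Hwv]; auto.
        apply Hout. intros [?|?]; auto.
      * intros w Hw; apply Hin; right; auto.
    + intros H [a Ha]. apply Ha. intros eP' Hout Hin. apply H.
      * intros w Hw. rewrite Hout by (intros Hc; apply Hw; right; auto).
        apply upd_neq. intros ->; apply Hw; left; auto.
      * intros w [<-|Hw]; auto. destruct (in_dec Nat.eq_dec v vs); auto.
        rewrite Hout, upd_eq by auto. discriminate.
Qed.

Definition has_domain {T} (e : nat -> option T) (vs : list nat) : Prop :=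
  forall v, e v <> None <-> In v vs.

Lemma has_domain_spec {T} (e : nat -> option T) vs :
  has_domain e vs <->
  (forall v, ~ In v vs -> e v = None) /\ (forall v, In v vs -> e v <> None).
Proof.
  unfold has_domain; split.
  - intros H; split; intros v; [|apply H]. intros Hv. destruct (e v) eqn:E; auto.
    exfalso; apply Hv, H; congruence.
  - intros [Hout Hin] v; split; [|apply Hin].
    intros Hv. destruct (in_dec Nat.eq_dec v vs) as [|Hn]; auto. exfalso; auto.
Qed.

Definition FNonAlgebraic (phi : pform) (x : nat) (VO VP : list nat) (n : nat) : pform :=
  FAllO VO (FAllP VP (FNot (FExP x (FAnd phi (FAnd (FNotInP x VP) (FNot (FAtLeast phi x n))))))).

Definition nonalgebraic_over M eO eP (phi : pform) (x n : nat) : Prop :=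
  forall w, psat k ar M eO (upd eP x (Some w)) phi -> (forall v, eP v <> Some w) ->
    solutions_at_least M eO eP phi x n.

Lemma psat_FNonAlgebraic M phi x VO VP n : ~ In x VP ->
  psat k ar M (fun _ => None) (fun _ => None) (FNonAlgebraic phi x VO VP n) <->
  forall eO eP, has_domain eO VO -> has_domain eP VP -> nonalgebraic_over M eO eP phi x n.
Proof.
  intros HxVP. unfold FNonAlgebraic. rewrite psat_FAllO.
  setoid_rewrite psat_FAllP. setoid_rewrite has_domain_spec.
  assert (Hbody : forall eO eP, (forall v, ~ In v VP -> eP v = None) ->
    psat k ar M eO eP (FNot (FExP x (FAnd phi (FAnd (FNotInP x VP) (FNot (FAtLeast phi x n)))))) <->
    nonalgebraic_over M eO eP phi x n).
  { intros eO eP Hout. unfold nonalgebraic_over. cbn [psat].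
    setoid_rewrite psat_FNotInP; auto. setoid_rewrite psat_FAtLeast.
    setoid_rewrite solutions_at_least_upd.
    assert (Hnew : forall w, (forall z, In z VP -> eP z <> Some w) <-> (forall v, eP v <> Some w)).
    { intros w; split; auto. intros H v E. destruct (in_dec Nat.eq_dec v VP) as [Hv|Hv].
      - exact (H v Hv E).
      - rewrite Hout in E by auto. discriminate. }
    split.
    - intros H w Hw Hw'. apply NNPP; intros Hn. apply H; exists w; repeat split; auto.
    - intros H [w [Hw [Hw' Hn]]]. apply Hn, (H w Hw), Hnew, Hw'. }
  split.
  - intros H eO eP [HOout HOin] [HPout HPin]. apply Hbody; auto.
  - intros H eO HOout HOin eP HPout HPin. apply Hbody; auto.
Qed.

Definition conjugate_over M (lo : list (oc M)) (lp : list (pc M)) (w y : pc M) : Prop :=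
  exists go gp go' gp', pisomorphism k ar M M go gp /\ pisomorphism k ar M M go' gp' /\
    (forall a, In a lo -> go a = go' a) /\ (forall c, In c lp -> gp c = gp' c) /\ gp w = gp' y.

Lemma psat_conjugate_over M lo lp w y eO eP phi x :
  conjugate_over M lo lp w y ->
  (forall v a, eO v = Some a -> In a lo) -> (forall v c, v <> x -> eP v = Some c -> In c lp) ->
  psat k ar M eO (upd eP x (Some w)) phi -> psat k ar M eO (upd eP x (Some y)) phi.
Proof.
  intros [go [gp [go' [gp' [Hg [Hg' [Hlo [Hlp Hwy]]]]]]]] HO HP Hw.
  rewrite (psat_pisomorphism _ _ _ _ Hg) in Hw. rewrite (psat_pisomorphism _ _ _ _ Hg').
  revert Hw. apply psat_ext.
  - intros v. destruct (eO v) as [a|] eqn:E; simpl; [rewrite Hlo by eauto|]; reflexivity.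
  - intros v. unfold upd. destruct (Nat.eqb_spec v x); simpl; [congruence|].
    destruct (eP v) as [c|] eqn:E; simpl; [rewrite Hlp by eauto|]; reflexivity.
Qed.

End Semantics.

Definition values {T} (e : nat -> option T) (vs : list nat) : list T :=
  flat_map (fun v => match e v with Some a => [a] | None => [] end) vs.

Lemma in_values {T} (e : nat -> option T) vs v a : In v vs -> e v = Some a -> In a (values e vs).
Proof. intros Hv E. apply in_flat_map. exists v. rewrite E. simpl; auto. Qed.

Lemma in_values_inv {T} (e : nat -> option T) vs a : In a (values e vs) -> exists v, e v = Some a.
Proof.
  intros H. apply in_flat_map in H as [v [_ H]].
  destruct (e v) eqn:E; [destruct H as [<-|[]]; eauto | destruct H].
Qed.

Definition assigned {T} (e : nat -> option T) (vs : list nat) : list nat :=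
  filter (fun v => match e v with Some _ => true | None => false end) vs.

Definition restrict {T} (e : nat -> option T) (vs : list nat) : nat -> option T :=
  fun v => if in_dec Nat.eq_dec v vs then e v else None.

Lemma has_domain_restrict_assigned {T} (e : nat -> option T) vs :
  has_domain (restrict e (assigned e vs)) (assigned e vs).
Proof.
  intros v. unfold restrict. destruct (in_dec Nat.eq_dec v (assigned e vs)) as [Hv|Hv].
  - split; auto. apply filter_In in Hv as [_ Hv]. destruct (e v); congruence.
  - tauto.
Qed.

Lemma restrict_assigned {T} (e : nat -> option T) vs v :
  In v vs -> restrict e (assigned e vs) v = e v.
Proof.
  intros Hv. unfold restrict. destruct (in_dec Nat.eq_dec v (assigned e vs)) as [|Hn]; auto.
  destruct (e v) eqn:E; auto. exfalso. apply Hn, filter_In. rewrite E. auto.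
Qed.

Lemma restrict_Some {T} (e : nat -> option T) vs v a :
  restrict e vs v = Some a -> In v vs /\ e v = Some a.
Proof. unfold restrict. destruct (in_dec Nat.eq_dec v vs); auto; discriminate. Qed.

Lemma distinct_witnesses {T} (R : nat -> T -> Prop) n :
  (forall j, j < n -> exists y, R j y) ->
  (forall i j y, i < n -> j < n -> R i y -> R j y -> i = j) ->
  exists ys, length ys = n /\ NoDup ys /\ forall y, In y ys -> exists j, j < n /\ R j y.
Proof.
  induction n as [|n IH]; intros Hex Hinj.
  - exists []. repeat split; [constructor | intros y []].
  - destruct IH as [ys [Hlen [Hnd Hys]]].
    + intros j Hj; apply Hex; lia.
    + intros i j y Hi Hj; apply Hinj; lia.
    + destruct (Hex n (Nat.lt_succ_diag_r n)) as [y Ry].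
      exists (y :: ys). repeat split.
      * simpl; congruence.
      * constructor; auto. intros Hy. destruct (Hys y Hy) as [j [Hj Rj]].
        assert (n = j) by (apply (Hinj n j y); auto; lia). lia.
      * intros z [<-|Hz]; [exists n; auto|].
        destruct (Hys z Hz) as [j [Hj Rj]]. exists j; split; auto.
Qed.

Lemma sig_eq {A} {P : A -> Prop} (x y : {a | P a}) : proj1_sig x = proj1_sig y -> x = y.
Proof. destruct x, y; simpl; intros ->; f_equal; apply proof_irrelevance. Qed.

Fixpoint sig_list {T} (l : list T) : list {y | In y l} :=
  match l with
  | [] => []
  | a :: l' => exist _ a (in_eq a l') ::
      map (fun s => exist (fun y => In y (a :: l')) (proj1_sig s) (in_cons a _ l' (proj2_sig s)))
          (sig_list l')
  end.

Lemma is_finite_In {T} (l : list T) : is_finite {y | In y l}.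
Proof.
  exists (sig_list l). induction l as [|a l IH]; intros [y Hy]; simpl; [destruct Hy|].
  destruct Hy as [E|Hy].
  - left. apply sig_eq; simpl; auto.
  - right. apply in_map_iff. exists (exist _ y Hy). split; [apply sig_eq; auto | apply IH].
Qed.

Lemma is_finite_sum {T U} : is_finite T -> is_finite U -> is_finite (T + U).
Proof.
  intros [l1 H1] [l2 H2]. exists (map inl l1 ++ map inr l2).
  intros [t|u]; apply in_or_app; [left|right]; apply in_map; auto.
Qed.

Definition pdup_base (D : Pstr) (w : pc D) (I : Type) (c : pc D + I) : pc D :=
  match c with inl c => c | inr _ => w end.

Definition pdup (D : Pstr) (w : pc D) (I : Type) : Pstr :=
  {| oc := oc D; pc := pc D + I; prel := fun i c ys => prel D i (pdup_base D w I c) ys |}.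

Section Embeddings.

Variables (k : nat) (ar : nat -> nat).

Lemma Kpfc_pdup K D w I : Kpfc k ar K D -> is_finite I -> Kpfc k ar K (pdup D w I).
Proof.
  intros [HO [HP Hfib]] HI. split; [exact HO|]. split; [apply is_finite_sum; auto|].
  intros c. exact (Hfib (pdup_base D w I c)).
Qed.

Lemma pembedding_pdup D w I (sg : pc D -> pc (pdup D w I)) :
  (forall c c', sg c = sg c' -> c = c') -> (forall c, pdup_base D w I (sg c) = c) ->
  pembedding k ar D (pdup D w I) (fun a => a) sg.
Proof.
  intros Hsg Hbase. split; [auto|]. split; [exact Hsg|].
  intros i b ys _ _. simpl. rewrite Hbase, map_id. reflexivity.
Qed.

Lemma pembedding_comp L M N fo fp go gp :
  pembedding k ar L M fo fp -> pembedding k ar M N go gp ->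
  pembedding k ar L N (fun a => go (fo a)) (fun c => gp (fp c)).
Proof.
  intros [Hfo [Hfp Hf]] [Hgo [Hgp Hg]]. split; [auto|]. split; [auto|].
  intros i b ys Hi Hl. rewrite Hf, Hg, map_map by (rewrite ?length_map; auto). reflexivity.
Qed.

End Embeddings.

Section FraisseLimit.

Variables (k : nat) (ar : nat -> nat) (K : Lstr -> Prop) (M : Pstr).
Hypothesis HM : fraisse_limit k ar (Kpfc k ar K) M.

Lemma fraisse_limit_extend SO SP fo fp :
  is_finite {x | SO x} -> is_finite {y | SP y} ->
  pembedding k ar (psubstr M SO SP) M fo fp ->
  exists go gp, pisomorphism k ar M M go gp /\
    (forall x, go (proj1_sig x) = fo x) /\ (forall y, gp (proj1_sig y) = fp y).
Proof.
  destruct HM as [_ [_ [_ [_ Hhom]]]]. intros HO HP [Hfo [Hfp Hf]].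
  set (TO := fun a => exists x, fo x = a). set (TP := fun c => exists y, fp y = c).
  destruct (Hhom SO SP TO TP (fun x => exist TO (fo x) (ex_intro _ x eq_refl))
                (fun y => exist TP (fp y) (ex_intro _ y eq_refl)) HO HP)
    as [go [gp [Hg [Hgo Hgp]]]]; [|exists go, gp; auto].
  split; [split; [|split] | split].
  - intros x y E. apply Hfo. exact (f_equal (@proj1_sig _ _) E).
  - intros x y E. apply Hfp. exact (f_equal (@proj1_sig _ _) E).
  - intros i b ys Hi Hl. simpl. rewrite map_map. exact (Hf i b ys Hi Hl).
  - intros [a [x E]]. exists x. apply sig_eq. exact E.
  - intros [c [y E]]. exists y. apply sig_eq. exact E.
Qed.

(* Copies of [w] with the same fibre are realised in [M]; ultrahomogeneity then moves [w]
   to each of them while keeping [lo] and [lp] in place. *)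
Lemma fraisse_limit_conjugates lo lp w : ~ In w lp -> forall n,
  exists ws, length ws = n /\ NoDup ws /\ forall y, In y ws -> conjugate_over k ar M lo lp w y.
Proof.
  intros Hw n. pose proof HM as [_ [_ [Hage [Hemb _]]]].
  set (D := psubstr M (fun a => In a lo) (fun c => In c (w :: lp))).
  set (w' := exist (fun c => In c (w :: lp)) w (in_eq w lp) : pc D).
  set (I := {m | In m (seq 0 n)}).
  assert (HC : Kpfc k ar K (pdup D w' I))
    by (apply Kpfc_pdup; [apply Hage|]; apply is_finite_In).
  destruct (Hemb _ HC) as [fo [fp Hf]].
  assert (Hext : forall sg : pc D -> pc (pdup D w' I),
    (forall c c', sg c = sg c' -> c = c') -> (forall c, pdup_base D w' I (sg c) = c) ->
    exists go gp, pisomorphism k ar M M go gp /\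
      (forall a, go (proj1_sig a) = fo a) /\ (forall c, gp (proj1_sig c) = fp (sg c))).
  { intros sg Hsg Hbase. apply fraisse_limit_extend; try apply is_finite_In.
    exact (pembedding_comp k ar _ _ _ _ _ _ _ (pembedding_pdup k ar D w' I sg Hsg Hbase) Hf). }
  destruct (Hext inl) as [go0 [gp0 [Hg0 [Hgo0 Hgp0]]]]; [congruence | reflexivity |].
  set (copy j := match in_dec Nat.eq_dec j (seq 0 n) with
                 | left h => inr (exist _ j h) | right _ => inl w' end : pc (pdup D w' I)).
  destruct (distinct_witnesses (fun j y => gp0 y = fp (copy j)) n) as [ws [Hlen [Hnd Hws]]].
  - intros j _. destruct Hg0 as [_ [_ Hsurj]]. apply Hsurj.
  - intros i j y Hi Hj Ei Ej. destruct Hf as [_ [Hfp _]].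
    assert (E : copy i = copy j) by (apply Hfp; congruence). unfold copy in E.
    destruct (in_dec Nat.eq_dec i (seq 0 n)) as [hi|hi]; [|exfalso; apply hi, in_seq; lia].
    destruct (in_dec Nat.eq_dec j (seq 0 n)) as [hj|hj]; [|exfalso; apply hj, in_seq; lia].
    injection E as E. exact E.
  - exists ws. repeat split; auto. intros y Hy. destruct (Hws y Hy) as [j [Hj Ey]].
    set (swap c := if excluded_middle_informative (c = w') then copy j else inl c).
    assert (Hbase : forall c, pdup_base D w' I (swap c) = c).
    { intros c. unfold swap, copy.
      destruct (excluded_middle_informative (c = w')) as [->|]; [|reflexivity].
      destruct (in_dec Nat.eq_dec j (seq 0 n)); reflexivity. }
    destruct (Hext swap) as [go [gp [Hg [Hgo Hgp]]]]; [|exact Hbase|].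
    { intros c c' E. rewrite <- (Hbase c), <- (Hbase c'), E. reflexivity. }
    exists go, gp, go0, gp0. split; [exact Hg|]. split; [exact Hg0|]. split; [|split].
    + intros a Ha. exact (eq_trans (Hgo (exist _ a Ha)) (eq_sym (Hgo0 (exist _ a Ha)))).
    + intros c Hc. set (s := exist (fun y => In y (w :: lp)) c (in_cons w c lp Hc)).
      rewrite (Hgp s : gp c = _), (Hgp0 s : gp0 c = _).
      unfold swap. destruct (excluded_middle_informative _) as [E|]; [|reflexivity].
      exfalso. apply Hw. injection E as ->. exact Hc.
    + rewrite (Hgp w' : gp w = _), Ey. unfold swap.
      destruct (excluded_middle_informative (w' = w')); [reflexivity | congruence].
Qed.

Lemma fraisse_limit_solutions_unbounded lo lp eO eP phi x w n :
  (forall v a, eO v = Some a -> In a lo) -> (forall v c, v <> x -> eP v = Some c -> In c lp) ->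
  ~ In w lp -> psat k ar M eO (upd eP x (Some w)) phi ->
  solutions_at_least k ar M eO eP phi x n.
Proof.
  intros HO HP Hw Hsat. destruct (fraisse_limit_conjugates lo lp w Hw n) as [ws [Hlen [Hnd Hws]]].
  exists ws. repeat split; auto. intros y Hy. eapply psat_conjugate_over; eauto.
Qed.

Lemma fraisse_limit_FNonAlgebraic phi x VO VP n : ~ In x VP ->
  psat k ar M (fun _ => None) (fun _ => None) (FNonAlgebraic phi x VO VP n).
Proof.
  intros HxVP. apply psat_FNonAlgebraic; auto. intros eO eP HdO HdP w Hw Hnew.
  apply (fraisse_limit_solutions_unbounded (values eO VO) (values eP VP) eO eP phi x w n); auto.
  - intros v a E. apply (in_values _ _ v); auto. apply HdO. congruence.
  - intros v c _ E. apply (in_values _ _ v); auto. apply HdP. congruence.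
  - intros Hin. apply in_values_inv in Hin as [v E]. exact (Hnew v E).
Qed.

End FraisseLimit.

Lemma in_aclP_param k ar N A0 B0 (b : pc N) : B0 b -> in_aclP k ar N A0 B0 b.
Proof.
  intros Hb. exists (FEqP 0 1), 0, (fun _ => None), (upd (fun _ => None) 1 (Some b)).
  split; [discriminate|]. split; [|split].
  - intros v c _. unfold upd. destruct (Nat.eqb v 1); [injection 1 as <-; exact Hb | discriminate].
  - exists b. auto.
  - exists [b]. intros b' [c [E1 E2]]. cbn in E1, E2. left; congruence.
Qed.

Theorem lemma4p6 (k : nat) (ar : nat -> nat) (K : Lstr -> Prop)
  (HK : fraisse_class k ar K) (HSAP : SAP k ar K)
  (M : Pstr) (HM : fraisse_limit k ar (Kpfc k ar K) M)
  (N : Pstr) (HN : elem_equiv k ar M N)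
  (A0 : oc N -> Prop) (B0 : pc N -> Prop) :
  forall b : pc N, in_aclP k ar N A0 B0 b <-> B0 b.
Proof.
  intros b; split; [|apply in_aclP_param].
  intros [phi [x [eO [eP [_ [HB0 [Hb [l Hl]]]]]]]]. apply NNPP; intros Hnb.
  set (VO := assigned eO (varsO phi)).
  set (VP := assigned eP (remove Nat.eq_dec x (varsP phi))).
  assert (HxVP : ~ In x VP)
    by (intros H; apply filter_In in H as [H _]; exact (remove_In _ _ _ H)).
  pose proof (fraisse_limit_FNonAlgebraic k ar K M HM phi x VO VP (S (length l)) HxVP) as HNs.
  apply HN in HNs. rewrite psat_FNonAlgebraic in HNs by exact HxVP.
  assert (Hrestrict : forall y, psat k ar N eO (upd eP x (Some y)) phi <->
                       psat k ar N (restrict eO VO) (upd (restrict eP VP) x (Some y)) phi).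
  { intros y. apply psat_agree.
    - intros v Hv. symmetry. apply restrict_assigned, Hv.
    - intros v Hv. unfold upd. destruct (Nat.eqb_spec v x); auto.
      symmetry. apply restrict_assigned, in_in_remove; auto. }
  destruct (HNs (restrict eO VO) (restrict eP VP) (has_domain_restrict_assigned _ _)
                (has_domain_restrict_assigned _ _) b) as [ws [Hlen [Hnd Hws]]].
  - apply Hrestrict, Hb.
  - intros v E. apply restrict_Some in E as [Hv E].
    apply Hnb, (HB0 v); auto. intros ->. exact (HxVP Hv).
  - assert (Hincl : incl ws l) by (intros y Hy; apply Hl, Hrestrict, Hws, Hy).
    pose proof (NoDup_incl_length Hnd Hincl). lia.
Qed.
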